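(* Let $\mathcal C\subseteq\mathbb F_2^n$ be a binary linear code, $\sigma\in S_n$, and $\prec$ an admissible order on $[X]$ with $x_1\prec\dots\prec x_n$. Let $G$ be the reduced basis of $\mathcal C$ (output of Algorithm R for $\mathcal C$ with $<_e$ built from $\prec$). Define the admissible order $\prec^\sigma$ by $u\prec^\sigma v$ iff $\sigma^{-1}(u)\prec\sigma^{-1}(v)$ (so $x_{\sigma(1)}\prec^\sigma\dots\prec^\sigma x_{\sigma(n)}$). Then $\sigma(G)$ is the reduced basis of $\sigma(\mathcal C)$ with respect to the error-vector order built from $\prec^\sigma$, i.e. it is the output $G$ of Algorithm R for $\sigma(\mathcal C)$ and that order.
   Context: Binary setting: $[X]$ is the free commutative monoid on $X=\{x_1,\dots,x_n\}$; $\psi(\prod x_i^{\beta_i})=(\beta_i\bmod 2)_i\in\mathbb F_2^n$; a code of dimension $k$ has a parity check matrix $H$ ($n\times(n-k)$, code $=\{c:cH=0\}$); syndrome $\xi(w)=\psi(w)H$ (with the parity check matrix of the code under consideration). $\mathrm{Ind}(w)=\{i:x_i\mid w\}$. For an admissible order $\prec$, the error-vector order is $u<_e w$ iff $|\mathrm{Ind}(u)|<|\mathrm{Ind}(w)|$, or equality and $u\prec w$. For $\sigma\in S_n$: $\sigma((y_i)_i)=(y_{\sigma^{-1}(i)})_i$, $\sigma(\mathcal C)=\{\sigma(c):c\in\mathcal C\}$, on $[X]$ $\sigma$ is the automorphism $x_i\mapsto x_{\sigma(i)}$, and on a set of binomials it acts termwise. Algorithm R (for a code and an error-vector order $<_e$):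 keep a list $L$ sorted increasingly by $<_e$, a set $N$ and a set $G$ of binomials; initially $L=(1)$, $N=G=\emptyset$. While $L\ne\emptyset$: remove the $<_e$-smallest $w$; if $w$ is divisible by the leading word of some binomial in $G$, discard it; otherwise, if some $w'\in N$ has $\xi(w')=\xi(w)$, add $w-w'$ to $G$ (leading word $w$); else add $w$ to $N$ and insert all $wx$ ($x\in X$) into $L$. Output $(N,G)$; $G$ is the reduced basis. *)

From mathcomp Require Import all_boot all_order all_algebra all_fingroup.
Set Implicit Arguments. Unset Strict Implicit. Unset Printing Implicit Defensive.
Import GRing.Theory.
Local Open Scope ring_scope.

(* Monomials of [X] = free commutative monoid on x_1..x_n, as exponent vectors. *)
Definition mon (n : nat) := {ffun 'I_n -> nat}.

Definition mone n : mon n := [ffun => 0%N].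
Definition mmul n (u v : mon n) : mon n := [ffun i => (u i + v i)%N].
Definition mvar n (i : 'I_n) : mon n := [ffun j => nat_of_bool (j == i)].
Definition mdivides n (u w : mon n) : bool := [forall i, (u i <= w i)%N].
Definition Ind n (w : mon n) : {set 'I_n} := [set i | (0 < w i)%N].

Definition admissible n (prec : rel (mon n)) : Prop :=
  [/\ irreflexive prec,
      transitive prec,
      (forall u v, u != v -> prec u v || prec v u),
      (forall u, u != mone n -> prec (mone n) u) &
      (forall u v w, prec u v -> prec (mmul u w) (mmul v w))].

Definition evorder n (prec : rel (mon n)) : rel (mon n) := fun u w =>
  (#|Ind u| < #|Ind w|)%N || ((#|Ind u| == #|Ind w|) && prec u w).

Definition psi n (w : mon n) : 'rV['F_2]_n := \row_i ((w i)%:R).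
Definition syndrome n m (H : 'M['F_2]_(n, m)) (w : mon n) : 'rV['F_2]_m :=
  psi w *m H.

(* Permutation actions: sigma((y_i)_i) = (y_{sigma^-1 i})_i ;
   on monomials x_i |-> x_{sigma i}; on binomials termwise. *)
Definition permv n (s : 'S_n) (y : 'rV['F_2]_n) : 'rV['F_2]_n :=
  \row_i y 0 ((s^-1)%g i).
Definition permcode n (s : 'S_n) (C : {vspace 'rV['F_2]_n}) : {set 'rV['F_2]_n} :=
  [set permv s c | c in C].
Definition permm n (s : 'S_n) (w : mon n) : mon n := [ffun i => w ((s^-1)%g i)].
Definition permbin n (s : 'S_n) (b : mon n * mon n) : mon n * mon n :=
  (permm s b.1, permm s b.2).
Definition permorder n (s : 'S_n) (prec : rel (mon n)) : rel (mon n) :=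
  fun u v => prec (permm (s^-1)%g u) (permm (s^-1)%g v).

(* A binomial w - w' is stored as the pair (w, w'); its leading word is w. *)
Definition Rstate n := (seq (mon n) * seq (mon n) * seq (mon n * mon n))%type.

Definition Rinit n : Rstate n := ([:: mone n], [::], [::]).

Definition seqmin T (lt : rel T) (a : T) (s : seq T) : T :=
  foldr (fun x m => if lt x m then x else m) a s.

Definition Rstep n m (H : 'M['F_2]_(n, m)) (elt : rel (mon n)) (st : Rstate n)
  : Rstate n :=
  let: (L, N, G) := st in
  match L with
  | [::] => st
  | a :: s =>
    let w := seqmin elt a s in
    let L' := rem w L in
    if has (fun b => mdivides b.1 w) G then (L', N, G)
    else match [seq w' <- N | syndrome H w' == syndrome H w] with
         | w' :: _ => (L', N, rcons G (w, w'))
         | [::] => (undup (L' ++ [seq mmul w (mvar i) | i <- enum 'I_n]),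
                    rcons N w, G)
         end
  end.

Definition R_output n m (H : 'M['F_2]_(n, m)) (elt : rel (mon n))
  (G : seq (mon n * mon n)) : Prop :=
  exists k N G0, iter k (Rstep H elt) (Rinit n) = ([::], N, G0) /\ G0 =i G.

From mathcomp Require Import all_boot all_order all_algebra all_fingroup.
Set Implicit Arguments. Unset Strict Implicit. Unset Printing Implicit Defensive.
Import GRing.Theory.

(* Algorithm R is equivariant under relabelling the variables.  The
   permutation σ preserves |Ind w| and divisibility, maps coincidence of
   syndromes for C to coincidence of syndromes for σ(C), and, by the very
   definition of ≺^σ, maps the error-vector order <_e onto the one built from
   ≺^σ.  Hence the run of R on σ(C) is, step by step, the image under σ of the
   run on C: the two lists L agree only up to reordering, which is harmless
   because the element removed is the unique minimum. *)

Definition strict_total_order (T : eqType) (lt : rel T) : Prop :=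
  [/\ irreflexive lt, transitive lt & forall x y, x != y -> lt x y || lt y x].

Section StrictTotalOrder.
Variables (T : eqType) (lt : rel T).
Hypothesis lt_order : strict_total_order lt.

Lemma seqmin_mem a s : seqmin lt a s \in a :: s.
Proof.
elim: s => [|y s IH] /=; first exact: mem_head.
case: ifP => _; first by rewrite !inE eqxx orbT.
by move: IH; rewrite !inE => /orP[] ->; rewrite ?orbT.
Qed.

Lemma seqmin_lt a s x : x \in a :: s -> x != seqmin lt a s -> lt (seqmin lt a s) x.
Proof.
have [irr tr tot] := lt_order.
have seqmin_minimal y : y \in a :: s -> ~~ lt y (seqmin lt a s).
  elim: s y => [|z s IH] y /=; first by rewrite inE => /eqP->; rewrite irr.
  rewrite in_cons orbCA -in_cons => /predU1P[->|/IH not_lt_y].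
    by case: ifP => [_|->]; rewrite ?irr.
  case: ifP => // lt_z; apply: contra not_lt_y => lt_yz.
  exact: tr lt_yz lt_z.
move=> xs ne; have := tot _ _ ne.
by rewrite (negbTE (seqmin_minimal x xs)).
Qed.

Lemma seqmin_eq a s y :
  y \in a :: s -> (forall x, x \in a :: s -> x != y -> lt y x) -> seqmin lt a s = y.
Proof.
have [irr tr _] := lt_order.
move=> ys y_min; case: (eqVneq (seqmin lt a s) y) => // ne.
have lt_y_min := y_min _ (seqmin_mem a s) ne.
have lt_min_y : lt (seqmin lt a s) y by apply: seqmin_lt; rewrite // eq_sym.
by have := irr y; rewrite (tr _ _ _ lt_y_min lt_min_y).
Qed.

End StrictTotalOrder.

Lemma seqmin_map (T U : eqType) (lt : rel T) (lt' : rel U) (f : T -> U) a s a' s' :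
  strict_total_order lt -> strict_total_order lt' ->
  {mono f : x y / lt x y >-> lt' x y} ->
  a' :: s' =i map f (a :: s) -> seqmin lt' a' s' = f (seqmin lt a s).
Proof.
move=> lt_order lt'_order f_mono eq_as; apply: seqmin_eq => //.
  by rewrite eq_as map_f ?seqmin_mem.
move=> y; rewrite eq_as => /mapP[x xs ->] ne.
by rewrite f_mono seqmin_lt //; apply: contraNneq ne => ->.
Qed.

Lemma strict_total_pre (T U : eqType) (f : T -> U) (lt : rel U) :
  injective f -> strict_total_order lt -> strict_total_order (fun x y => lt (f x) (f y)).
Proof.
move=> f_inj [irr tr tot]; split=> [x|y x z|x y ne]; first exact: irr.
  exact: tr.
by apply: tot; rewrite (inj_eq f_inj).
Qed.

Lemma mem_rem_map (T U : eqType) (f : T -> U) (s : seq T) (t : seq U) x :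
  injective f -> uniq s -> uniq t -> t =i map f s -> rem (f x) t =i map f (rem x s).
Proof.
move=> f_inj s_uniq t_uniq eq_ts y; rewrite mem_rem_uniq // inE /= eq_ts.
apply/andP/mapP => [[ne /mapP[z zs def_y]] | [z]].
  exists z => //; rewrite mem_rem_uniq // inE zs andbT.
  by apply: contraNneq ne => z_x; rewrite def_y z_x.
by rewrite mem_rem_uniq // inE => /andP[ne zs] ->; rewrite (inj_eq f_inj) ne map_f.
Qed.

Section PermuteVariables.
Variables (n : nat) (s : 'S_n).
Implicit Types (u v w : mon n) (prec : rel (mon n)).

Lemma permmK : cancel (permm s) (permm s^-1%g).
Proof. by move=> u; apply/ffunP=> i; rewrite !ffunE invgK permK. Qed.

Lemma permmKV : cancel (permm s^-1%g) (permm s).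
Proof. by move=> u; apply/ffunP=> i; rewrite !ffunE invgK permKV. Qed.

Lemma permm_inj : injective (permm s).
Proof. exact: can_inj permmK. Qed.

Lemma permm1 : permm s (mone n) = mone n.
Proof. by apply/ffunP=> i; rewrite !ffunE. Qed.

Lemma permmM u v : permm s (mmul u v) = mmul (permm s u) (permm s v).
Proof. by apply/ffunP=> i; rewrite !ffunE. Qed.

Lemma permm_var i : permm s (mvar i) = mvar (s i).
Proof.
apply/ffunP=> j; rewrite !ffunE; congr nat_of_bool.
by apply/eqP/eqP => [<-|->]; rewrite ?permKV ?permK.
Qed.

Lemma card_Ind_permm u : #|Ind (permm s u)| = #|Ind u|.
Proof.
have -> : Ind (permm s u) = s^-1%g @^-1: Ind u by apply/setP=> i; rewrite !inE ffunE.
exact/card_preimset/perm_inj.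
Qed.

Lemma mdivides_permm u v : mdivides (permm s u) (permm s v) = mdivides u v.
Proof.
apply/forallP/forallP => le_uv i; last by rewrite !ffunE.
by have := le_uv (s i); rewrite !ffunE permK.
Qed.

Lemma psi_permm w : psi (permm s w) = permv s (psi w).
Proof. by apply/rowP=> i; rewrite !mxE ffunE. Qed.

Lemma permm_neighbours w :
  [seq mmul (permm s w) (mvar i) | i <- enum 'I_n]
    =i map (permm s) [seq mmul w (mvar i) | i <- enum 'I_n].
Proof.
move=> x; rewrite -map_comp; apply/mapP/mapP => [[i _ ->]|[i _ ->]].
  by exists (s^-1%g i); rewrite ?mem_enum //= permmM permm_var permKV.
by exists (s i); rewrite ?mem_enum //= permmM permm_var.
Qed.

Lemma permorder_strict_total prec :
  strict_total_order prec -> strict_total_order (permorder s prec).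
Proof. exact/strict_total_pre/can_inj/permmKV. Qed.

Lemma evorder_permm prec :
  {mono permm s : u v / evorder prec u v >-> evorder (permorder s prec) u v}.
Proof. by move=> u v; rewrite /evorder /permorder !card_Ind_permm !permmK. Qed.

End PermuteVariables.

Lemma evorder_strict_total n (prec : rel (mon n)) :
  strict_total_order prec -> strict_total_order (evorder prec).
Proof.
move=> [irr tr tot]; split=> [u|v u w|u v ne]; rewrite /evorder.
- by rewrite ltnn eqxx irr.
- case/orP=> [lt_uv|/andP[/eqP-> prec_uv]] /orP[lt_vw|/andP[/eqP<- prec_vw]].
  + by rewrite (ltn_trans lt_uv lt_vw).
  + by rewrite lt_uv.
  + by rewrite lt_vw.
  + by rewrite eqxx (tr _ _ _ prec_uv prec_vw) orbT.
- by case: ltngtP => //= _; rewrite tot.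
Qed.

Lemma admissible_strict_total n (prec : rel (mon n)) :
  admissible prec -> strict_total_order prec.
Proof. by case. Qed.

Section Syndromes.
Variables (n : nat) (s : 'S_n).
Local Open Scope ring_scope.

Lemma permvK : cancel (permv s) (permv s^-1%g).
Proof. by move=> y; apply/rowP=> i; rewrite !mxE invgK permK. Qed.

Lemma permvB x y : permv s (x - y) = permv s x - permv s y.
Proof. by apply/rowP=> i; rewrite !mxE. Qed.

Lemma permv_permcode (C : {vspace 'rV['F_2]_n}) c :
  (permv s c \in permcode s C) = (c \in C).
Proof.
apply/imsetP/idP => [[c' c'C /(can_inj permvK) ->] // | cC].
by exists c.
Qed.

Lemma eq_syndrome_code m (H : 'M['F_2]_(n, m)) (code : pred 'rV['F_2]_n) u v :
  (forall c, (c *m H == 0) = code c) ->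
  (syndrome H u == syndrome H v) = code (psi u - psi v).
Proof. by move=> H_code; rewrite -H_code mulmxBl subr_eq0. Qed.

Lemma eq_syndrome_permm m (C : {vspace 'rV['F_2]_n}) (H Hs : 'M['F_2]_(n, m)) u v :
  (forall c, (c *m H == 0) = (c \in C)) ->
  (forall c, (c *m Hs == 0) = (c \in permcode s C)) ->
  (syndrome Hs (permm s u) == syndrome Hs (permm s v)) = (syndrome H u == syndrome H v).
Proof.
move=> H_C Hs_C.
rewrite (eq_syndrome_code (H := H) (code := fun c => c \in C)) //.
rewrite (eq_syndrome_code (H := Hs) (code := fun c => c \in permcode s C)) //.
by rewrite !psi_permm -permvB permv_permcode.
Qed.

End Syndromes.

(* The lists L are matched only as sets; keeping them duplicate-free makes
   [rem] respect that matching. *)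
Definition related_states n (s : 'S_n) (st st' : Rstate n) : Prop :=
  [/\ uniq st.1.1, uniq st'.1.1, st'.1.1 =i map (permm s) st.1.1,
      st'.1.2 = map (permm s) st.1.2 & st'.2 = map (permbin s) st.2].

Section Simulation.
Variables (n m : nat) (C : {vspace 'rV['F_2]_n}) (s : 'S_n) (prec : rel (mon n)).
Variables (H Hs : 'M['F_2]_(n, m)).
Hypothesis prec_order : strict_total_order prec.
Hypothesis H_C : forall c, (c *m H == 0)%R = (c \in C).
Hypothesis Hs_C : forall c, (c *m Hs == 0)%R = (c \in permcode s C).

Lemma Rinit_related : related_states s (Rinit n) (Rinit n).
Proof. by split=> //= x; rewrite permm1. Qed.

Lemma Rstep_related st st' : related_states s st st' ->
  related_states s (Rstep H (evorder prec) st) (Rstep Hs (evorder (permorder s prec)) st').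
Proof.
case: st st' => [[L N] G] [[L' N'] G'] [/= L_uniq L'_uniq eq_L -> ->].
case: L L_uniq eq_L => [|a l] L_uniq eq_L; case: L' L'_uniq eq_L => [|a' l'] L'_uniq eq_L.
- by [].
- by have := eq_L a'; rewrite inE eqxx.
- by have := eq_L (permm s a); rewrite /= inE eqxx.
rewrite /Rstep; set w := seqmin (evorder prec) a l.
have -> : seqmin (evorder (permorder s prec)) a' l' = permm s w.
  apply: seqmin_map eq_L; [exact: evorder_strict_total | | exact: evorder_permm].
  exact/evorder_strict_total/permorder_strict_total.
have eq_rem := mem_rem_map w (@permm_inj n s) L_uniq L'_uniq eq_L.
have -> : has (fun b => mdivides b.1 (permm s w)) (map (permbin s) G) =
          has (fun b => mdivides b.1 w) G.
  by rewrite has_map; apply: eq_has => b /=; rewrite mdivides_permm.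
rewrite filter_map (eq_filter (a2 := fun x => syndrome H x == syndrome H w)); last first.
  by move=> x /=; rewrite (eq_syndrome_permm _ _ H_C Hs_C).
case: ifP => _; first by split; rewrite ?rem_uniq.
case: [seq x <- N | _] => [|w' ?]; split; rewrite ?rem_uniq ?undup_uniq ?map_rcons //.
move=> x; rewrite mem_undup mem_cat eq_rem permm_neighbours -mem_cat -map_cat.
exact/esym/eq_mem_map/mem_undup.
Qed.

Lemma iter_Rstep_related k :
  related_states s (iter k (Rstep H (evorder prec)) (Rinit n))
                   (iter k (Rstep Hs (evorder (permorder s prec))) (Rinit n)).
Proof.
elim: k => [|k IH]; first exact: Rinit_related.
by rewrite !iterS; apply: Rstep_related.
Qed.

End Simulation.

Theorem theorem4p1 (n : nat) (C : {vspace 'rV['F_2]_n}) (s : 'S_n)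
  (prec : rel (mon n))
  (H : 'M['F_2]_(n, n - \dim C)) (Hs : 'M['F_2]_(n, n - \dim C))
  (G : seq (mon n * mon n)) :
  admissible prec ->
  (forall i j : 'I_n, (i < j)%N -> prec (mvar i) (mvar j)) ->
  (forall c : 'rV['F_2]_n, (c *m H == 0)%R = (c \in C)) ->
  (forall c : 'rV['F_2]_n, (c *m Hs == 0)%R = (c \in permcode s C)) ->
  R_output H (evorder prec) G ->
  R_output Hs (evorder (permorder s prec)) (map (permbin s) G).
Proof.
move=> /admissible_strict_total prec_order _ H_C Hs_C [k [N [G0 [run_k eq_G]]]].
have := iter_Rstep_related prec_order H_C Hs_C k; rewrite run_k.
case run_k' : (iter k (Rstep Hs _) _) => [[L' N'] G'] [/= _ _ eq_L _ def_G'].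
have L'_nil : L' = [::] by case: L' eq_L {run_k'} => // a l /(_ a); rewrite inE eqxx.
exists k, N', G'; split; first by rewrite run_k' L'_nil.
by rewrite def_G'; exact: eq_mem_map eq_G.
Qed.
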